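(* If two virtual strings $\alpha$ and $\beta$ are homotopic, then their $r$-th coverings $\alpha^{(r)}$ and $\beta^{(r)}$ are homotopic for every integer $r\ge 1$.
   Context: A virtual string $\alpha$ of rank $m\ge0$ is an oriented circle $S$ (core circle) with $2m$ distinct points partitioned into $m$ ordered pairs $(a,b)$ (arrows; $a$ tail, $b$ head). Two strings are homeomorphic if an orientation-preserving homeomorphism of core circles carries arrows onto arrows. For distinct $a,b\in S$, $ab$ is the arc from $a$ to $b$ in the positive direction. Homotopy moves: (a) for distinct $a,b\in S$ with $ab$ containing no endpoints of arrows, add the arrow $(a,b)$; (b) choose two disjoint arcs of $S$ containing no endpoints of arrows, let $a,a'$ be the endpoints of the first (in either order) and $b,b'$ of the second (in either order), and add the arrows $(a,b)$ and $(b',a')$; (c) if the string has arrows $(a^+,b),(b^+,c),(c^+,a)$ where the arcs $aa^+,bb^+,cc^+$ are pairwise disjoint and contain no other endpoints of arrows, replace these three arrows by $(a,b^+),(b,c^+),(c,a^+)$. Two strings are homotopic if they are related by a finite sequence of homeomorphisms, these moves and their inverses. For an arrow $e=(a,b)$, an arrow $f=(c,d)\ne e$ links $e$ positively if $c\in ab,d\in ba$, negatively if $c\in ba,d\in ab$; $n(e)$ is the number of arrows linking $e$ positively minus the number linking it negatively. The $r$-th covering $\alpha^{(r)}$ is the string with core circle $S$ whose arrows are the arrows $e$ of $\alpha$ with $n(e)\in r\mathbb{Z}$ (with $n(e)$ computed in $\alpha$). *)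

From Stdlib Require Import Relation_Operators.
From mathcomp Require Import all_boot all_order all_algebra.
Set Implicit Arguments. Unset Strict Implicit. Unset Printing Implicit Defensive.

Definition endpt := (nat * bool)%type.
Definition tl (e : nat) : endpt := (e, false).
Definition hd (e : nat) : endpt := (e, true).

(* A virtual string is the list of the 2m endpoints of its arrows, read along
   the core circle in the positive direction from some base point. *)
Definition vstring := seq endpt.
Definition wf (s : vstring) : bool :=
  uniq s && all (fun p => (p.1, ~~ p.2) \in s) s.

Definition labels (s : vstring) : seq nat := undup (map fst s).

Definition relabel (f : nat -> nat) (s : vstring) : vstring :=
  map (fun p => (f p.1, p.2)) s.

(* Homeomorphism: an orientation preserving homeomorphism of core circles
   carrying arrows onto arrows = a cyclic rotation of the word together with
   a renaming of the arrows. *)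
Definition homeomorphic (s t : vstring) : Prop :=
  wf s /\ wf t /\ exists (k : nat) (f : nat -> nat), t = rot k (relabel f s).

(* Move (a): add an arrow (a,b) whose arc ab contains no endpoints. *)
Definition move_a (s t : vstring) : Prop :=
  exists (s1 s2 : vstring) (e : nat),
    [/\ s = s1 ++ s2, e \notin map fst s & t = s1 ++ [:: tl e; hd e] ++ s2].

(* Move (b): two disjoint free arcs; the first receives a (tail of e) and
   a' (head of f) in either order, the second b (head of e) and b' (tail of f)
   in either order; arrows e = (a,b), f = (b',a'). *)
Definition move_b (s t : vstring) : Prop :=
  exists (s1 s2 s3 : vstring) (e f : nat) (X Y : vstring),
    s = s1 ++ s2 ++ s3 /\ e != f /\ e \notin map fst s /\ f \notin map fst s /\
    perm_eq X [:: tl e; hd f] /\ perm_eq Y [:: hd e; tl f] /\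
    t = s1 ++ X ++ s2 ++ Y ++ s3.

(* Move (c): arrows e1 = (a+,b), e2 = (b+,c), e3 = (c+,a) with free arcs
   aa+, bb+, cc+ are replaced by (a,b+), (b,c+), (c,a+) (keeping the names
   e1, e2, e3 for the arrows joining the same pairs of arcs).  The arcs
   aa+, bb+, cc+ may occur in either cyclic order. *)
Definition move_c (s t : vstring) : Prop :=
  exists (s1 s2 s3 s4 : vstring) (e1 e2 e3 : nat),
    (s = s1 ++ [:: hd e3; tl e1] ++ s2 ++ [:: hd e1; tl e2] ++ s3
            ++ [:: hd e2; tl e3] ++ s4 /\
     t = s1 ++ [:: tl e1; hd e3] ++ s2 ++ [:: tl e2; hd e1] ++ s3
            ++ [:: tl e3; hd e2] ++ s4) \/
    (s = s1 ++ [:: hd e3; tl e1] ++ s2 ++ [:: hd e2; tl e3] ++ s3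
            ++ [:: hd e1; tl e2] ++ s4 /\
     t = s1 ++ [:: tl e1; hd e3] ++ s2 ++ [:: tl e3; hd e2] ++ s3
            ++ [:: tl e2; hd e1] ++ s4).

Definition hstep (s t : vstring) : Prop :=
  wf s /\ wf t /\
  (homeomorphic s t \/ move_a s t \/ move_b s t \/ move_c s t).

Definition homotopic (s t : vstring) : Prop := clos_refl_sym_trans _ hstep s t.

(* x lies in the open arc from a to b (positive direction). *)
Definition in_arc (s : vstring) (a b x : endpt) : bool :=
  let i := index a s in let j := index b s in let k := index x s in
  if i < j then (i < k) && (k < j) else (i < k) || (k < j).

Definition links_pos (s : vstring) (e f : nat) : bool :=
  in_arc s (tl e) (hd e) (tl f) && in_arc s (hd e) (tl e) (hd f).
Definition links_neg (s : vstring) (e f : nat) : bool :=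
  in_arc s (hd e) (tl e) (tl f) && in_arc s (tl e) (hd e) (hd f).

Definition nidx (s : vstring) (e : nat) : int :=
  let others := [seq f <- labels s | f != e] in
  ((count (links_pos s e) others)%:Z - (count (links_neg s e) others)%:Z)%R.

Definition covering (r : nat) (s : vstring) : vstring :=
  [seq p <- s | (r%:Z %| nidx s p.1)%Z].

(* Give every endpoint the weight +1 if it is a tail and -1 if it is a head,
   and let [wbefore s x] be the total weight of the endpoints preceding [x]
   in the word [s].  Since the total weight of a word is 0, the linking
   number of an arrow [e] is
       n(e) = wbefore s (hd e) - wbefore s (tl e) - 1,
   the weight of the arc from its tail to its head.  A homeomorphism shifts
   all the values of [wbefore] by the same constant; moves (a) and (b) insert
   blocks of weight 0 and do not change [wbefore] at the other endpoints; and
   move (c) swaps three adjacent head-tail pairs, which raises [wbefore] by 1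
   at the six endpoints involved and nowhere else.  Hence every arrow that is
   not created by the move keeps its index, so it survives in the r-th
   covering on both sides or on neither.  The new arrows have n = 0 in move
   (a), opposite indices in move (b), and in move (c) the three indices add
   up to 0, so two of them are divisible by r only if all three are.  Each
   move therefore induces on the coverings either the same move or nothing. *)

From mathcomp Require Import all_boot all_order all_algebra zify.
From Stdlib Require Import Relation_Operators.
Set Implicit Arguments. Unset Strict Implicit. Unset Printing Implicit Defensive.
Import GRing.Theory.

Definition cyc_between (i j k : nat) : bool :=
  if i < j then (i < k) && (k < j) else (i < k) || (k < j).

Lemma in_arcE s a b x :
  in_arc s a b x = cyc_between (index a s) (index b s) (index x s).
Proof. by []. Qed.

Lemma cyc_between_l i j : cyc_between i j i = false.
Proof. rewrite /cyc_between; case: ifP; lia. Qed.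

Lemma cyc_between_r i j : cyc_between i j j = false.
Proof. rewrite /cyc_between; case: ifP; lia. Qed.

Lemma cyc_betweenC i j k : i != j -> k != i -> k != j ->
  cyc_between j i k = ~~ cyc_between i j k.
Proof. rewrite /cyc_between; case: ifP; case: ifP; lia. Qed.

Local Open Scope ring_scope.

Lemma sum_nat_if_const (m n : nat) (P : pred nat) (F : nat -> int) (b : bool) :
  (forall k, (m <= k < n)%N -> P k = b) ->
  \sum_(m <= k < n) (if P k then F k else 0) = if b then \sum_(m <= k < n) F k else 0.
Proof.
move=> HP; rewrite (eq_big_nat _ _ (F2 := fun k => if b then F k else 0)).
  by case: b {HP} => //; rewrite big1.
by move=> k /HP ->.
Qed.

Lemma sum_cyc_between (F : nat -> int) n i j :
  (i < n)%N -> (j < n)%N -> i != j -> \sum_(0 <= k < n) F k = 0 ->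
  \sum_(0 <= k < n | cyc_between i j k) F k =
  \sum_(0 <= k < j) F k - \sum_(0 <= k < i.+1) F k.
Proof.
move=> lt_in lt_jn neq_ij sum0; rewrite big_mkcond /=.
case: (ltnP i j) => [lt_ij|le_ji].
- rewrite (big_cat_nat (leq0n i.+1) lt_in) (big_cat_nat lt_ij (ltnW lt_jn)) /=.
  rewrite (big_cat_nat (leq0n i.+1) lt_ij) /=.
  rewrite (@sum_nat_if_const 0 i.+1 _ _ false) ?(@sum_nat_if_const i.+1 j _ _ true)
    ?(@sum_nat_if_const j n _ _ false) => [|k|k|k]; rewrite /cyc_between ?lt_ij; try lia.
  by rewrite add0r addr0 addrC addrK.
- have lt_ji : (j < i)%N by rewrite ltn_neqAle eq_sym neq_ij le_ji.
  rewrite (big_cat_nat (leq0n j) (ltnW lt_jn)) (big_cat_nat (leqW le_ji) lt_in) /=.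
  rewrite (big_cat_nat (leq0n j) (ltnW lt_jn)) (big_cat_nat (leqW le_ji) lt_in) /= in sum0.
  rewrite [in RHS](big_cat_nat (leq0n j) (leqW le_ji)) /=.
  rewrite (@sum_nat_if_const 0 j _ _ true) ?(@sum_nat_if_const j i.+1 _ _ false)
    ?(@sum_nat_if_const i.+1 n _ _ true) => [|k|k|k];
    rewrite /cyc_between ?ltnNge ?le_ji /=; try lia.
  by move/eqP: sum0; rewrite addrA addr_eq0 => /eqP ->; rewrite add0r opprK.
Qed.

Lemma sum_take (T : Type) (x0 : T) (s : seq T) (F : T -> int) m : (m <= size s)%N ->
  \sum_(x <- take m s) F x = \sum_(0 <= k < m) F (nth x0 s k).
Proof.
move=> le_ms; rewrite (big_nth x0) size_takel //.
by apply: eq_big_nat => k /andP[_ lt_km]; rewrite nth_take.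
Qed.

Lemma sum_in_arc (s : seq endpt) a b (F : endpt -> int) :
  uniq s -> a \in s -> b \in s -> a != b -> \sum_(x <- s) F x = 0 ->
  \sum_(x <- s | in_arc s a b x) F x =
  \sum_(x <- take (index b s) s) F x - \sum_(x <- take (index a s) s) F x - F a.
Proof.
move=> uniq_s a_s b_s neq_ab sum0.
have lt_as : (index a s < size s)%N by rewrite index_mem.
have lt_bs : (index b s < size s)%N by rewrite index_mem.
have neq_idx : index a s != index b s by apply: contra_neq neq_ab; apply: index_inj.
rewrite (big_nth a) big_mkcond /=.
rewrite (eq_big_nat _ _ (F2 := fun k =>
  if cyc_between (index a s) (index b s) k then F (nth a s k) else 0)); last first.
  by move=> k /andP[_ lt_ks]; rewrite in_arcE index_uniq.
rewrite -big_mkcond sum_cyc_between //; last by rewrite (big_nth a) in sum0.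
by rewrite big_nat_recr //= !(sum_take a) 1?ltnW // nth_index // opprD addrA.
Qed.

Lemma index_map_uniq (T1 T2 : eqType) (f : T1 -> T2) (s : seq T1) x :
  uniq (map f s) -> x \in s -> index (f x) (map f s) = index x s.
Proof.
elim: s => //= y s IH /andP[fy_fs uniq_fs]; rewrite inE => /predU1P[->|x_s].
  by rewrite !eqxx.
have fx_fs : f x \in map f s by apply: map_f.
have neq_fyx : f y != f x by apply: contraNneq fy_fs => ->.
have neq_yx : y != x by apply: contra_neq neq_fyx => ->.
by rewrite (negbTE neq_fyx) (negbTE neq_yx) IH.
Qed.

Lemma perm_eq_pair (T : eqType) (X : seq T) x y :
  perm_eq X [:: x; y] -> X = [:: x; y] \/ X = [:: y; x].
Proof.
move=> pX; have := perm_size pX; case: X pX => [|u [|v []]] // pX _.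
have: u \in [:: x; y] by rewrite -(perm_mem pX) mem_head.
rewrite !inE => /orP[]/eqP Eu; subst u; [left | right].
  by move: pX; rewrite perm_cons => /(@perm_small_eq _ _ [:: y] isT) ->.
have pyx : perm_eq [:: x; y] [:: y; x] by rewrite (perm_catC [:: x]).
by move: (perm_trans pX pyx); rewrite perm_cons => /(@perm_small_eq _ _ [:: x] isT) ->.
Qed.

Lemma perm_swap_pair (T : eqType) (A B : seq T) u v :
  perm_eq (A ++ [:: v; u] ++ B) (A ++ [:: u; v] ++ B).
Proof. by rewrite perm_cat2l perm_cat2r (perm_catC [:: v]). Qed.

Lemma filter_rot (T : Type) (P : pred T) k (s : seq T) :
  filter P (rot k s) = rot (count P (take k s)) (filter P s).
Proof.
rewrite -{3}(cat_take_drop k s) filter_cat -size_filter rot_size_cat.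
by rewrite /rot filter_cat.
Qed.

Lemma filter_const (T : eqType) (P : pred T) (l : seq T) b :
  {in l, forall x, P x = b} -> filter P l = if b then l else [::].
Proof.
move=> Pb; rewrite (eq_in_filter Pb).
by case: b {Pb}; [exact: filter_predT | exact: filter_pred0].
Qed.

Lemma filter_swap_pair (T : Type) (P : pred T) u v :
  ~~ (P u && P v) -> filter P [:: v; u] = filter P [:: u; v].
Proof. by rewrite /=; case: (P u); case: (P v). Qed.

Lemma filter_pair_kept (T : Type) (P : pred T) u v : P u -> P v ->
  filter P [:: u; v] = [:: u; v] /\ filter P [:: v; u] = [:: v; u].
Proof. by move=> /= -> ->. Qed.

Lemma dvdz_third (d x y z : int) :
  x + y + z = 0 -> (d %| x)%Z -> (d %| y)%Z -> (d %| z)%Z.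
Proof.
move=> sum0 dx dy; suff -> : z = - (x + y) by rewrite rpredN rpredD.
by apply/eqP; rewrite -addr_eq0 addrC sum0.
Qed.

Lemma dvdz_two_of_three (d x y z : int) : x + y + z = 0 ->
  [&& d %| x, d %| y & d %| z]%Z ||
  [&& ~~ ((d %| x) && (d %| y)), ~~ ((d %| y) && (d %| z)) & ~~ ((d %| z) && (d %| x))]%Z.
Proof.
move=> sum0.
have sum1 : y + z + x = 0 by rewrite addrC addrA.
have sum2 : z + x + y = 0 by rewrite addrC addrA.
by case dx: (d %| x)%Z; case dy: (d %| y)%Z; case dz: (d %| z)%Z => //=;
  rewrite -?dx -?dy -?dz;
  first [apply: (dvdz_third sum0) | apply: (dvdz_third sum1) | apply: (dvdz_third sum2)];
  rewrite ?dx ?dy ?dz.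
Qed.

Lemma wf_uniq s : wf s -> uniq s.
Proof. by case/andP. Qed.

Lemma wf_partner s x : wf s -> x \in s -> (x.1, ~~ x.2) \in s.
Proof. by case/andP=> _ /allP; apply. Qed.

Lemma wf_perm s t : perm_eq s t -> wf s = wf t.
Proof.
move=> pst; rewrite /wf (perm_uniq pst) (perm_all _ pst); congr (_ && _).
by apply: eq_all => x; rewrite (perm_mem pst).
Qed.

Lemma wf_rot k s : wf (rot k s) = wf s.
Proof. by apply: wf_perm; rewrite perm_rot. Qed.

Lemma mem_labels s x : x \in s -> x.1 \in labels s.
Proof. by move=> xs; rewrite mem_undup map_f. Qed.

Lemma labels_subset s t : {subset s <= t} -> {subset labels s <= labels t}.
Proof. by move=> sub_st g; rewrite !mem_undup => /mapP[x /sub_st x_t ->]; apply: map_f. Qed.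

Lemma labels_perm s t : perm_eq s t -> labels s =i labels t.
Proof. by move=> pst g; rewrite !mem_undup; apply/perm_mem/perm_map. Qed.

Lemma labels_endpts s g : wf s -> g \in labels s -> (tl g \in s) && (hd g \in s).
Proof.
move=> wf_s; rewrite mem_undup => /mapP[[h b] hb_s /= ->].
by have := wf_partner wf_s hb_s; case: b hb_s => /= -> ->.
Qed.

Lemma labels_tl s g : wf s -> g \in labels s -> tl g \in s.
Proof. by move=> wf_s /(labels_endpts wf_s)/andP[]. Qed.

Lemma labels_hd s g : wf s -> g \in labels s -> hd g \in s.
Proof. by move=> wf_s /(labels_endpts wf_s)/andP[]. Qed.

Lemma labels_endpt s g b : wf s -> g \in labels s -> (g, b) \in s.
Proof. by case: b; [apply: labels_hd | apply: labels_tl]. Qed.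

Lemma notin_map_fst (x : endpt) (X : seq endpt) : x.1 \notin map fst X -> x \notin X.
Proof. by apply: contra => /(map_f fst). Qed.

Lemma perm_labels s : wf s ->
  perm_eq s [seq (g, b) | g <- labels s, b <- [:: false; true]].
Proof.
move=> wf_s; apply: uniq_perm; first exact: wf_uniq.
  by rewrite allpairs_uniq ?undup_uniq // => [[? ?] [? ?] _ _ [-> ->]].
move=> [g b]; apply/idP/allpairsP => [gb_s|[[h c] [/= h_s _ [-> ->]]]].
  by exists (g, b); rewrite /= (mem_labels gb_s); case: b {gb_s}.
by case: c; [apply: labels_hd | apply: labels_tl].
Qed.

Lemma sum_labels s (F : endpt -> int) : wf s ->
  \sum_(x <- s) F x = \sum_(g <- labels s) (F (tl g) + F (hd g)).
Proof.
move=> wf_s; rewrite (perm_big _ (perm_labels wf_s)) big_allpairs.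
by apply: eq_bigr => g _; rewrite !big_cons big_nil /= addr0.
Qed.

Definition weight (x : endpt) : int := if x.2 then -1 else 1.
Definition wsum (l : seq endpt) : int := \sum_(x <- l) weight x.
Definition wbefore (s : vstring) (x : endpt) : int := wsum (take (index x s) s).

Lemma weight_tl g : weight (tl g) = 1.
Proof. by []. Qed.

Lemma wsum_cat A B : wsum (A ++ B) = wsum A + wsum B.
Proof. exact: big_cat. Qed.

Lemma wsum_pair x y : wsum [:: x; y] = weight x + weight y.
Proof. by rewrite /wsum !big_cons big_nil addr0. Qed.

Lemma wsum_perm X Y : perm_eq X Y -> wsum X = wsum Y.
Proof. exact: perm_big. Qed.

Lemma wsum_wf s : wf s -> wsum s = 0.
Proof. by move=> wf_s; rewrite /wsum (sum_labels _ wf_s) big1 // => g _; rewrite addrN. Qed.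

Lemma in_arcC s a b x : uniq s -> a \in s -> b \in s -> x \in s ->
  a != b -> x != a -> x != b -> in_arc s b a x = ~~ in_arc s a b x.
Proof.
move=> uniq_s a_s b_s x_s neq_ab neq_xa neq_xb; rewrite !in_arcE cyc_betweenC //.
- by apply: contra_neq neq_ab; apply: index_inj.
- by apply: contra_neq neq_xa; apply: index_inj.
- by apply: contra_neq neq_xb; apply: index_inj.
Qed.

Lemma nidx_in_arc s g : wf s -> g \in labels s ->
  nidx s g = \sum_(x <- s | in_arc s (tl g) (hd g) x) weight x.
Proof.
move=> wf_s g_s; have uniq_s := wf_uniq wf_s.
have tg_s := labels_tl wf_s g_s; have hg_s := labels_hd wf_s g_s.
rewrite big_mkcond (sum_labels _ wf_s) (bigD1_seq g) ?undup_uniq //=.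
rewrite !in_arcE !cyc_between_l !cyc_between_r add0r.
rewrite /nidx -!sum1_count !raddf_sum /= !big_filter_cond !big_mkcondr -big_split /=.
rewrite big_seq_cond [RHS]big_seq_cond; apply: eq_bigr => h /andP[h_s neq_hg].
have th_s := labels_tl wf_s h_s; have hh_s := labels_hd wf_s h_s.
rewrite /links_pos /links_neg !(in_arcC uniq_s tg_s hg_s) //;
  try by [apply/eqP; case | apply: contra_neq neq_hg => -[]].
by case: (in_arc _ _ _ (tl h)); case: (in_arc _ _ _ (hd h)).
Qed.

Lemma nidx_wbefore s g : wf s -> g \in labels s ->
  nidx s g = wbefore s (hd g) - wbefore s (tl g) - 1.
Proof.
move=> wf_s g_s; rewrite nidx_in_arc // sum_in_arc ?wf_uniq ?labels_tl ?labels_hd //.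
- by apply/eqP; case.
- exact: wsum_wf.
Qed.

Lemma nidx_wbefore_shift s t g (c : int) :
  wf s -> wf t -> g \in labels s -> g \in labels t ->
  (forall b, wbefore t (g, b) = wbefore s (g, b) + c) -> nidx t g = nidx s g.
Proof.
move=> wf_s wf_t g_s g_t shift; rewrite !nidx_wbefore // !shift.
by rewrite opprD addrACA subrr addr0.
Qed.

Lemma wbefore_cat A B x :
  wbefore (A ++ B) x = if x \in A then wbefore A x else wsum A + wbefore B x.
Proof.
rewrite /wbefore index_cat; case: ifP => [x_A|_]; rewrite take_cat.
  by rewrite index_mem x_A.
by rewrite ltnNge leq_addr /= addKn wsum_cat.
Qed.

Lemma wbefore_insert A X B z : z \notin X -> wsum X = 0 ->
  wbefore (A ++ X ++ B) z = wbefore (A ++ B) z.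
Proof. by move=> z_X wX; rewrite !wbefore_cat (negbTE z_X) wX add0r. Qed.

Lemma wbefore_insert2 A B C X Y z : z \notin X -> z \notin Y -> wsum X = 0 -> wsum Y = 0 ->
  wbefore (A ++ X ++ B ++ Y ++ C) z = wbefore (A ++ B ++ C) z.
Proof. by move=> z_X z_Y wX wY; rewrite wbefore_insert // catA wbefore_insert // -catA. Qed.

Lemma wbefore_adjacent A B u v : uniq (A ++ u :: v :: B) ->
  wbefore (A ++ u :: v :: B) v = wbefore (A ++ u :: v :: B) u + weight u.
Proof.
rewrite cat_uniq /= => /and3P[_ /norP[u_A /norP[v_A _]] /andP[/norP[neq_uv _] _]].
rewrite !wbefore_cat (negbTE u_A) (negbTE v_A) /wbefore /= eqxx (negbTE neq_uv) /=.
by rewrite eqxx /wsum big_seq1 /= big_nil addr0.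
Qed.

Lemma wbefore_perm_pair A B X x y : uniq (A ++ X ++ B) -> perm_eq X [:: x; y] ->
  weight x + weight y = 0 -> wbefore (A ++ X ++ B) y = wbefore (A ++ X ++ B) x + weight x.
Proof.
move=> uniq_s /perm_eq_pair[] EX wxy; rewrite EX in uniq_s *; rewrite wbefore_adjacent //.
by rewrite -addrA [weight y + _]addrC wxy addr0.
Qed.

Lemma wbefore_swap A B u v z : uniq (A ++ u :: v :: B) ->
  wbefore (A ++ v :: u :: B) z = wbefore (A ++ u :: v :: B) z +
    (if z == u then weight v else if z == v then - weight u else 0).
Proof.
rewrite cat_uniq /= => /and3P[_ /norP[u_A /norP[v_A _]] /andP[/norP[neq_uv _] _]].
rewrite !wbefore_cat; case: ifP => [z_A|_].
  have neq_zu : z != u by apply: contraNneq u_A => <-.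
  have neq_zv : z != v by apply: contraNneq v_A => <-.
  by rewrite (negbTE neq_zu) (negbTE neq_zv) addr0.
rewrite -[u :: v :: B]/([:: u] ++ [:: v] ++ B) -[v :: u :: B]/([:: v] ++ [:: u] ++ B).
rewrite !wbefore_cat !inE.
have wb1 y : wbefore [:: y] y = 0 by rewrite /wbefore /= eqxx /wsum big_nil.
have ws1 y : wsum [:: y] = weight y by rewrite /wsum big_seq1.
have [->|neq_zu] := eqVneq z u; first by rewrite (negbTE neq_uv) !wb1 ws1 !addr0.
have [->|neq_zv] := eqVneq z v; first by rewrite wb1 ws1 !addr0 addrK.
by rewrite addr0 [wsum [:: v] + _]addrCA.
Qed.

Lemma wbefore_rot k s x : uniq s -> wsum s = 0 -> x \in s ->
  wbefore (rot k s) x = wbefore s x - wsum (take k s).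
Proof.
rewrite -{1 2 3 5}(cat_take_drop k s) cat_uniq wsum_cat mem_cat.
move=> /and3P[_ /hasPn disj _] sum0 x_s; rewrite /rot !wbefore_cat.
case: ifP => [x_drop|x_take]; first by rewrite (negbTE (disj x x_drop)) addrC addKr.
move: x_s; rewrite x_take orbF => ->.
suff -> : wsum (drop k s) = - wsum (take k s) by rewrite addrC.
by apply/eqP; rewrite -addr_eq0 addrC sum0.
Qed.

Lemma wbefore_relabel f s x : uniq (relabel f s) -> x \in s ->
  wbefore (relabel f s) (f x.1, x.2) = wbefore s x.
Proof.
move=> uniq_fs x_s; rewrite /wbefore /relabel.
by rewrite (index_map_uniq (f := fun p : endpt => (f p.1, p.2))) // -map_take /wsum big_map.
Qed.

Lemma nidx_rot k s g : wf s -> g \in labels s -> nidx (rot k s) g = nidx s g.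
Proof.
move=> wf_s g_s; have uniq_s := wf_uniq wf_s; have sum0 := wsum_wf wf_s.
apply: (nidx_wbefore_shift (c := - wsum (take k s))) => //.
- by rewrite wf_rot.
- by apply: labels_subset g_s => x; rewrite mem_rot.
- by move=> b; rewrite wbefore_rot // labels_endpt.
Qed.

Lemma nidx_relabel f s g : wf s -> wf (relabel f s) -> g \in labels s ->
  nidx (relabel f s) (f g) = nidx s g.
Proof.
move=> wf_s wf_fs g_s; have uniq_fs := wf_uniq wf_fs.
have fg_fs : f g \in labels (relabel f s).
  by rewrite -[f g]/(f (tl g).1, (tl g).2).1 mem_labels // map_f // labels_tl.
rewrite !nidx_wbefore // -[hd (f g)]/(f (hd g).1, (hd g).2) -[tl (f g)]/(f (tl g).1, (tl g).2).
by rewrite !wbefore_relabel ?labels_tl ?labels_hd.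
Qed.

Lemma nidx_swap A B x y g :
  wf (A ++ [:: hd x; tl y] ++ B) -> g \in labels (A ++ [:: hd x; tl y] ++ B) ->
  nidx (A ++ [:: tl y; hd x] ++ B) g =
  nidx (A ++ [:: hd x; tl y] ++ B) g + (g == x)%:Z - (g == y)%:Z.
Proof.
move=> wf_s g_s; have pts := perm_swap_pair A B (hd x) (tl y).
rewrite !nidx_wbefore ?(wf_perm pts) ?(labels_perm pts) //.
rewrite !(wbefore_swap (u := hd x) (v := tl y)) ?wf_uniq // /tl /hd !xpair_eqE /= ?andbT ?andbF /=.
set a := wbefore _ (g, true); set b := wbefore _ (g, false).
by case: (g == x); case: (g == y); rewrite /weight /=; lia.
Qed.

Lemma wf_covering r s : wf s -> wf (covering r s).
Proof.
move=> wf_s; apply/andP; split; first by rewrite filter_uniq ?wf_uniq.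
by apply/allP => x; rewrite !mem_filter => /andP[kx x_s] /=; rewrite kx wf_partner.
Qed.

Lemma covering_fresh r s e : e \notin map fst s -> e \notin map fst (covering r s).
Proof. by apply: contra => /mapP[x]; rewrite mem_filter => /andP[_ x_s] ->; apply: map_f. Qed.

Lemma covering_homeomorphic r s t :
  homeomorphic s t -> homeomorphic (covering r s) (covering r t).
Proof.
move=> [wf_s [wf_t [k [f Et]]]].
have wf_fs : wf (relabel f s) by rewrite -(wf_rot k) -Et.
split; [exact: wf_covering | split; [exact: wf_covering | ]].
exists (count (fun p => (r%:Z %| nidx t p.1)%Z) (take k (relabel f s))), f.
rewrite /covering [X in filter _ X]Et filter_rot; congr rot.
rewrite /relabel filter_map; congr map; apply: eq_in_filter => x x_s /=.
have fx_fs : f x.1 \in labels (relabel f s).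
  by rewrite -[f x.1]/(f x.1, x.2).1 mem_labels // (map_f (fun p : endpt => (f p.1, p.2))).
by rewrite Et nidx_rot ?nidx_relabel ?mem_labels.
Qed.

Lemma covering_move_a r s t : wf s -> wf t -> move_a s t ->
  move_a (covering r s) (covering r t).
Proof.
move=> wf_s wf_t [s1 [s2 [e [Es e_s Et]]]].
have sub_st : {subset s <= t}.
  by move=> x; rewrite Es Et !mem_cat => /orP[] ->; rewrite ?orbT.
have nidx_old p : p \in s -> nidx t p.1 = nidx s p.1.
  move=> p_s; have g_s := mem_labels p_s.
  have g_e : p.1 \notin map fst [:: tl e; hd e].
    by rewrite /= !inE orbb; apply: contraNneq e_s => <-; apply: map_f.
  apply: (nidx_wbefore_shift (c := 0)) => //; first exact: labels_subset g_s.
  move=> b; rewrite Et Es wbefore_insert ?addr0 ?wsum_pair ?addrN //.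
  by apply: notin_map_fst.
have nidx_e : nidx t e = 0.
  have e_t : e \in labels t by rewrite -[e]/(tl e).1 mem_labels // Et mem_cat mem_head orbT.
  rewrite nidx_wbefore // Et wbefore_adjacent -?Et ?wf_uniq //.
  by rewrite weight_tl addrAC addrK subrr.
pose keep (p : endpt) := (r%:Z %| nidx s p.1)%Z.
exists (filter keep s1), (filter keep s2), e; split.
- by rewrite /covering [X in filter _ X]Es filter_cat.
- exact: covering_fresh.
- rewrite /covering [X in filter _ X]Et !filter_cat; congr (_ ++ _ ++ _).
  + by apply: eq_in_filter => p p_s1; rewrite nidx_old // Es mem_cat p_s1.
  + by rewrite /= nidx_e dvdz0.
  + by apply: eq_in_filter => p p_s2; rewrite nidx_old // Es mem_cat p_s2 orbT.
Qed.

Lemma covering_move_b r s t : wf s -> wf t -> move_b s t ->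
  covering r t = covering r s \/ move_b (covering r s) (covering r t).
Proof.
move=> wf_s wf_t [s1 [s2 [s3 [e [f [X [Y [Es [neq_ef [e_s [f_s [pX [pY Et]]]]]]]]]]]]].
have uniq_t := wf_uniq wf_t.
have lab_X : map fst X =i [:: e; f] by apply/perm_mem; apply: (perm_map fst pX).
have lab_Y : map fst Y =i [:: e; f] by apply/perm_mem; apply: (perm_map fst pY).
have sub_st : {subset s <= t}.
  by move=> x; rewrite Es Et !mem_cat => /or3P[] ->; rewrite ?orbT.
have nidx_old p : p \in s -> nidx t p.1 = nidx s p.1.
  move=> p_s; have g_s := mem_labels p_s.
  have g_ef : p.1 \notin [:: e; f].
    rewrite !inE negb_or; apply/andP; split.
      by apply: contraNneq e_s => <-; apply: map_f.
    by apply: contraNneq f_s => <-; apply: map_f.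
  apply: (nidx_wbefore_shift (c := 0)) => //; first exact: labels_subset g_s.
  move=> b; rewrite Et Es wbefore_insert2 ?addr0 //;
    rewrite ?(wsum_perm pX) ?(wsum_perm pY) ?wsum_pair ?addrN //.
    by apply: notin_map_fst; rewrite lab_X.
  by apply: notin_map_fst; rewrite lab_Y.
have [e_t f_t] : e \in labels t /\ f \in labels t.
  by split; [rewrite -[e]/(tl e).1 | rewrite -[f]/(tl f).1]; rewrite mem_labels // Et !mem_cat
    ?(perm_mem pX) ?(perm_mem pY) !inE eqxx ?orbT.
have nidx_f : nidx t f = - nidx t e.
  have hd_f : wbefore t (hd f) = wbefore t (tl e) + 1.
    by rewrite Et (wbefore_perm_pair _ pX) -?Et.
  have tl_f : wbefore t (tl f) = wbefore t (hd e) - 1.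
    have Et' : t = (s1 ++ X ++ s2) ++ Y ++ s3 by rewrite Et -!catA.
    by rewrite Et' (wbefore_perm_pair _ pY) -?Et'.
  rewrite !nidx_wbefore // hd_f tl_f.
  set a := wbefore t (tl e); set b := wbefore t (hd e); lia.
pose keep (p : endpt) := (r%:Z %| nidx s p.1)%Z.
have keep_old (l : seq endpt) : {subset l <= s} ->
    filter (fun p => r%:Z %| nidx t p.1)%Z l = filter keep l.
  by move=> sub_ls; apply: eq_in_filter => p /sub_ls p_s; rewrite nidx_old.
have keep_new (W : seq endpt) : map fst W =i [:: e; f] ->
    filter (fun p => r%:Z %| nidx t p.1)%Z W = if (r%:Z %| nidx t e)%Z then W else [::].
  move=> lab_W; apply: filter_const => x /(map_f fst); rewrite lab_W !inE.
  by case/orP=> /eqP ->; rewrite ?nidx_f ?rpredN.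
have cov_s : covering r s = filter keep s1 ++ filter keep s2 ++ filter keep s3.
  by rewrite /covering [X in filter _ X]Es !filter_cat.
have cov_t : covering r t = filter keep s1 ++ (if (r%:Z %| nidx t e)%Z then X else [::]) ++
    filter keep s2 ++ (if (r%:Z %| nidx t e)%Z then Y else [::]) ++ filter keep s3.
  rewrite /covering [X in filter _ X]Et !filter_cat (keep_new X) // (keep_new Y) //.
  by rewrite !keep_old // => x x_s; rewrite Es !mem_cat x_s ?orbT.
rewrite cov_t; case: (r%:Z %| nidx t e)%Z; [right | by left].
exists (filter keep s1), (filter keep s2), (filter keep s3), e, f, X, Y.
by split; last by rewrite !covering_fresh.
Qed.

Section SwapPairs.

Variables (s1 s2 s3 s4 : vstring) (a1 b1 a2 b2 a3 b3 : nat).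

Let s := s1 ++ [:: hd a1; tl b1] ++ s2 ++ [:: hd a2; tl b2] ++ s3 ++ [:: hd a3; tl b3] ++ s4.
Let t := s1 ++ [:: tl b1; hd a1] ++ s2 ++ [:: tl b2; hd a2] ++ s3 ++ [:: tl b3; hd a3] ++ s4.

Hypothesis wf_s : wf s.

Lemma perm_swap_pairs : perm_eq t s.
Proof. by apply/permP => p; rewrite /t /s !count_cat /=; lia. Qed.

Lemma nidx_swap_pairs g : perm_eq [:: a1; a2; a3] [:: b1; b2; b3] ->
  g \in labels s -> nidx t g = nidx s g.
Proof.
move=> heads_tails g_s.
set A2 := s1 ++ [:: tl b1; hd a1] ++ s2.
set A3 := A2 ++ [:: tl b2; hd a2] ++ s3.
set m1 := s1 ++ [:: tl b1; hd a1] ++ s2 ++ [:: hd a2; tl b2] ++ s3 ++ [:: hd a3; tl b3] ++ s4.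
set m2 := A3 ++ [:: hd a3; tl b3] ++ s4.
have Em1 : m1 = A2 ++ [:: hd a2; tl b2] ++ s3 ++ [:: hd a3; tl b3] ++ s4.
  by rewrite /m1 /A2 -!catA.
have Em2 : A2 ++ [:: tl b2; hd a2] ++ s3 ++ [:: hd a3; tl b3] ++ s4 = m2.
  by rewrite /m2 /A3 -!catA.
have Et : t = A3 ++ [:: tl b3; hd a3] ++ s4 by rewrite /t /A3 /A2 -!catA.
have p1 : perm_eq m1 s by apply: perm_swap_pair.
have p2 : perm_eq m2 m1 by rewrite Em1 -Em2 perm_swap_pair.
have wf_m1 : wf m1 by rewrite (wf_perm p1).
have wf_m2 : wf m2 by rewrite (wf_perm p2).
have g_m1 : g \in labels m1 by rewrite (labels_perm p1).
have g_m2 : g \in labels m2 by rewrite (labels_perm p2).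
rewrite Et nidx_swap // -/m2 -Em2 nidx_swap -?Em1 // nidx_swap //.
(* the corrections (g == a_i) - (g == b_i) cancel out since b is a permutation of a *)
have := permP heads_tails (pred1 g); rewrite /= !(eq_sym _ g).
rewrite -/s; lia.
Qed.

Lemma nidx_sum_swap_pairs : perm_eq [:: a1; a2; a3] [:: b1; b2; b3] ->
  nidx s a1 + nidx s a2 + nidx s a3 = 0.
Proof.
move=> heads_tails; have uniq_s := wf_uniq wf_s.
have adjacent a b (A B : vstring) : s = A ++ [:: hd a; tl b] ++ B ->
    a \in labels s /\ wbefore s (tl b) = wbefore s (hd a) - 1.
  move=> Es; split; first by rewrite -[a]/(hd a).1 mem_labels // Es mem_cat mem_head orbT.
  by rewrite Es wbefore_adjacent -?Es.
have Es2 : s = (s1 ++ [:: hd a1; tl b1] ++ s2) ++ [:: hd a2; tl b2] ++ s3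
               ++ [:: hd a3; tl b3] ++ s4 by rewrite -!catA.
have Es3 : s = (s1 ++ [:: hd a1; tl b1] ++ s2 ++ [:: hd a2; tl b2] ++ s3)
               ++ [:: hd a3; tl b3] ++ s4 by rewrite -!catA.
have [a1_s adj1] := adjacent a1 b1 s1 _ erefl.
have [a2_s adj2] := adjacent a2 b2 _ _ Es2.
have [a3_s adj3] := adjacent a3 b3 _ _ Es3.
have sum_tl : \sum_(e <- [:: a1; a2; a3]) wbefore s (tl e) =
              \sum_(e <- [:: b1; b2; b3]) wbefore s (tl e) by apply: perm_big.
rewrite !big_cons big_nil adj1 adj2 adj3 in sum_tl.
rewrite !nidx_wbefore //; move: sum_tl.
set x1 := wbefore s (hd a1); set x2 := wbefore s (hd a2); set x3 := wbefore s (hd a3).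
set y1 := wbefore s (tl a1); set y2 := wbefore s (tl a2); set y3 := wbefore s (tl a3).
lia.
Qed.

(* The pairs [hd a_i; tl b_i] are the arcs aa+, bb+, cc+ of move (c); for either
   cyclic order of these arcs, b is a rotation of a. *)
Lemma covering_swap_pairs r :
  (b1, b2, b3) = (a2, a3, a1) \/ (b1, b2, b3) = (a3, a1, a2) ->
  covering r t = covering r s \/
  exists c1 c2 c3 c4 : vstring,
    covering r s = c1 ++ [:: hd a1; tl b1] ++ c2 ++ [:: hd a2; tl b2] ++ c3
                      ++ [:: hd a3; tl b3] ++ c4 /\
    covering r t = c1 ++ [:: tl b1; hd a1] ++ c2 ++ [:: tl b2; hd a2] ++ c3
                      ++ [:: tl b3; hd a3] ++ c4.
Proof.
move=> rotated.
have heads_tails : perm_eq [:: a1; a2; a3] [:: b1; b2; b3].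
  by case: rotated => -[-> -> ->]; apply/permP => p /=; lia.
pose keep (p : endpt) := (r%:Z %| nidx s p.1)%Z.
have cov_s : covering r s = filter keep s by [].
have cov_t : covering r t = filter keep t.
  apply: eq_in_filter => p p_t; rewrite nidx_swap_pairs // mem_labels //.
  by rewrite -(perm_mem perm_swap_pairs).
have keep_hd a : keep (hd a) = (r%:Z %| nidx s a)%Z by [].
have keep_tl a : keep (tl a) = keep (hd a) by [].
have := dvdz_two_of_three r (nidx_sum_swap_pairs heads_tails).
rewrite -!keep_hd cov_s cov_t /s /t !filter_cat; clear cov_s cov_t keep_hd.
(* an opaque [keep] prevents simplification from unfolding [nidx] *)
clearbody keep.
case/orP => [/and3P[k1 k2 k3] | no_pair]; [right | left].
- have /and3P[kb1 kb2 /andP[kb3 _]] : all (fun e => keep (tl e)) [:: b1; b2; b3].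
    by rewrite -(perm_all _ heads_tails) /= !keep_tl k1 k2 k3.
  exists (filter keep s1), (filter keep s2), (filter keep s3), (filter keep s4).
  have [-> ->] := filter_pair_kept k1 kb1.
  have [-> ->] := filter_pair_kept k2 kb2.
  by have [-> ->] := filter_pair_kept k3 kb3.
- move: no_pair; case: rotated => -[-> -> ->] /and3P[? ? ?].
  all: rewrite (filter_swap_pair (u := hd a1)) ?(filter_swap_pair (u := hd a2))
               ?(filter_swap_pair (u := hd a3)) // keep_tl.
  all: by [| rewrite andbC].
Qed.

End SwapPairs.

Lemma covering_move_c r s t : wf s -> move_c s t ->
  covering r t = covering r s \/ move_c (covering r s) (covering r t).
Proof.
move=> wf_s [s1 [s2 [s3 [s4 [e1 [e2 [e3 []]]]]]]] [Es ->]; rewrite Es in wf_s *.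
- have [->|[c1 [c2 [c3 [c4 [-> ->]]]]]] := covering_swap_pairs wf_s r (or_introl erefl).
    by left.
  by right; exists c1, c2, c3, c4, e1, e2, e3; left.
- have [->|[c1 [c2 [c3 [c4 [-> ->]]]]]] := covering_swap_pairs wf_s r (or_intror erefl).
    by left.
  by right; exists c1, c2, c3, c4, e1, e2, e3; right.
Qed.

Lemma covering_hstep r s t : hstep s t -> homotopic (covering r s) (covering r t).
Proof.
move=> [wf_s [wf_t step]].
have cov_step : homeomorphic (covering r s) (covering r t) \/ move_a (covering r s) (covering r t)
    \/ move_b (covering r s) (covering r t) \/ move_c (covering r s) (covering r t) ->
    homotopic (covering r s) (covering r t).
  by move=> h; apply: rst_step; split; [|split]; rewrite ?wf_covering.
case: step => [h | [h | [h | h]]].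
- by apply: cov_step; left; apply: covering_homeomorphic.
- by apply: cov_step; right; left; apply: covering_move_a.
- have [-> | hb] := covering_move_b r wf_s wf_t h; first exact: rst_refl.
  by apply: cov_step; do 2 right; left.
- have [-> | hc] := covering_move_c r wf_s h; first exact: rst_refl.
  by apply: cov_step; do 3 right.
Qed.

Local Close Scope ring_scope.

Theorem lemma3p2 (r : nat) (alpha beta : vstring) :
  0 < r -> wf alpha -> wf beta -> homotopic alpha beta ->
  homotopic (covering r alpha) (covering r beta).
Proof.
move=> _ _ _; elim=> [s t /(covering_hstep r) // | s | s t _ | s t u _ st _ tu].
- exact: rst_refl.
- exact: rst_sym.
- exact: rst_trans st tu.
Qed.
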